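(* There exist an absolute constant $c>0$ and an infinite strictly increasing sequence of integer bases $(b_i)_{i\geq1}$, $b_i\ge 2$, such that $\overleftarrow{K}_{b_i}\geq c\log b_i$ for every $i$. In particular $\overleftarrow{K}_{b_i}\to\infty$ as $i\to\infty$.
   Context: For a base $b\ge2$ and a positive integer $n$ with $L$ digits in base $b$, $n=\sum_{0\leq i<L}\varepsilon_i(n)b^i$ ($\varepsilon_i(n)\in\{0,\dots,b-1\}$, $\varepsilon_{L-1}(n)\neq0$), its digital reverse is $\overleftarrow{n}=\sum_{0\leq i<L}\varepsilon_i(n)b^{L-1-i}$; a base-$b$ reversed prime is a number $\overleftarrow{p}$ with $p$ prime. $\overleftarrow{K}_b$ denotes the smallest integer $K$ such that every sufficiently large integer $N$ can be written as a sum of at most $K$ base-$b$ reversed primes, with $\overleftarrow{K}_b=\infty$ if no such $K$ exists. *)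

From mathcomp Require Import all_boot.
From Stdlib Require Import Reals.

(* Base-b digits of n, least significant first: eps_0(n), ..., eps_{L-1}(n).
   Uses fuel n (enough since each step divides by b >= 2). digits b 0 = [::]. *)
Fixpoint digits_aux (fuel b n : nat) : seq nat :=
  match fuel with
  | 0 => [::]
  | fuel'.+1 => if n == 0 then [::] else (n %% b) :: digits_aux fuel' b (n %/ b)
  end.

Definition digits (b n : nat) : seq nat := digits_aux n b n.

Definition of_digits (b : nat) (s : seq nat) : nat :=
  foldr (fun d acc => d + b * acc) 0 s.

Definition rev_digits (b n : nat) : nat := of_digits b (rev (digits b n)).

Definition reversed_prime (b m : nat) : Prop :=
  exists p : nat, prime p /\ m = rev_digits b p.

Definition sum_reversed_primes_bound (b K : nat) : Prop :=
  exists N0 : nat, forall N : nat, N0 <= N ->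
    exists s : seq nat, size s <= K /\ (forall m, m \in s -> reversed_prime b m)
                        /\ sumn s = N.

(* "K_b >= x" for real x, with K_b the least such K (or infinity if none):
   equivalently every admissible K satisfies x <= K. *)
Definition Krev_ge (b : nat) (x : R) : Prop :=
  forall K : nat, sum_reversed_primes_bound b K -> (x <= INR K)%R.

(* For b = primorial n * 2 ^ n every prime q <= n divides b, so the last base-b
   digit of a prime p >= b is coprime to b, hence equal to 1 or larger than n.
   That digit leads the digital reverse of p, so a reversed prime not exceeding
   n * b ^ j is smaller than 2 * b ^ j, and writing n * b ^ j (j large) as a sum
   of K reversed primes forces n <= 2 K.  Erdős's middle-binomial argument gives
   primorial n <= 4 ^ n, so ln b <= 3 n ln 2 <= 6 K. *)

From mathcomp Require Import all_boot.
From Stdlib Require Import Reals Lra.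
(* Stdlib's [Reals] rebinds [^] on [nat] to [Nat.pow]; reimporting [ssrnat] restores [expn]. *)
From mathcomp Require Import ssrnat zify.

Definition primorial (n : nat) : nat := \prod_(0 <= p < n.+1 | prime p) p.

Lemma primorialS n :
  primorial n.+1 = primorial n * (if prime n.+1 then n.+1 else 1).
Proof. by rewrite /primorial big_mkcond big_nat_recr //= -big_mkcond. Qed.

Lemma primorial_gt0 n : 0 < primorial n.
Proof. by rewrite /primorial big_seq_cond prodn_cond_gt0 // => p /andP[_ /prime_gt0]. Qed.

Lemma primorial_leqS n : primorial n <= primorial n.+1.
Proof. by rewrite primorialS leq_pmulr //; case: ifP. Qed.

Lemma dvdn_primorial q n : prime q -> q <= n -> q %| primorial n.
Proof.
move=> pr_q le_qn; rewrite /primorial -big_filter (big_rem q) ?dvdn_mulr //.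
by rewrite mem_filter pr_q mem_index_iota.
Qed.

Lemma dvdn_prod_primes (s : seq nat) X :
  uniq s -> all prime s -> {in s, forall p, p %| X} -> \prod_(p <- s) p %| X.
Proof.
elim: s => [|p s IHs] /=; first by rewrite big_nil dvd1n.
case/andP=> p_notin_s uniq_s /andP[pr_p pr_s] dvdX.
have cop : coprime p (\prod_(q <- s) q).
  rewrite big_seq; apply: (big_ind (coprime p)) => [|x y|q q_s]; first exact: coprimen1.
    by rewrite coprimeMr => ->.
  rewrite prime_coprime // dvdn_prime2 // ?(allP pr_s q q_s) //.
  by apply: contraNneq p_notin_s => ->.
rewrite big_cons Gauss_dvd // dvdX ?mem_head ?IHs // => q q_s.
by rewrite dvdX // in_cons q_s orbT.
Qed.

Lemma prime_coprime_fact p k : prime p -> k < p -> coprime p k`!.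
Proof.
move=> pr_p; elim: k => [|k IHk] lt_kp; first exact: coprimen1.
rewrite factS coprimeMr IHk 1?ltnW // andbT prime_coprime //.
by apply/negP => /(dvdn_leq (ltn0Sn k)); lia.
Qed.

Lemma bin_add_binS_leq n k : 'C(n, k) + 'C(n, k.+1) <= 2 ^ n.
Proof.
elim: n k => [|n IHn] [|k] //; first by rewrite bin0 bin1 add1n; exact: ltn_expl.
by rewrite !binS expnS mul2n -addnn addnACA leq_add.
Qed.

Lemma bin_mid_leq m : 'C(m.*2.+1, m.+1) <= 4 ^ m.
Proof. by rewrite binS addnC -[4]/(2 ^ 2) -expnM mul2n bin_add_binS_leq. Qed.

Lemma prime_dvdn_bin_mid p m :
  prime p -> m.+1 < p <= m.*2.+1 -> p %| 'C(m.*2.+1, m.+1).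
Proof.
move=> pr_p /andP[lt_mp le_pm].
have le_mn : m.+1 <= m.*2.+1 by lia.
have := bin_fact le_mn; rewrite (_ : m.*2.+1 - m.+1 = m); last by lia.
move=> fact_bin.
have cop : coprime p ((m.+1)`! * m`!).
  by rewrite coprimeMr !prime_coprime_fact //; lia.
by rewrite -(Gauss_dvdl _ cop) fact_bin dvdn_fact // prime_gt0.
Qed.

Lemma prod_primes_mid_dvdn_bin m :
  \prod_(m.+2 <= p < m.*2.+2 | prime p) p %| 'C(m.*2.+1, m.+1).
Proof.
rewrite -big_filter; apply: dvdn_prod_primes.
- exact/filter_uniq/iota_uniq.
- exact: filter_all.
- by move=> p; rewrite mem_filter mem_index_iota => /andP[pr_p]; apply: prime_dvdn_bin_mid.
Qed.

Lemma primorial_leq_exp4 n : primorial n <= 4 ^ n.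
Proof.
elim/ltn_ind: n => n IHn.
have [le_n2 | lt_2n] := leqP n 2.
  by case: n {IHn} le_n2 => [|[|[|]]] // _; rewrite /primorial unlock.
have [odd_n | even_n] := boolP (odd n).
  have def_n : n = (n./2).*2.+1 by rewrite -[LHS]odd_double_half odd_n.
  set m := n./2 in def_n; rewrite def_n.
  rewrite /primorial (@big_cat_nat _ _ _ m.+2) //=; last by lia.
  have -> : 4 ^ m.*2.+1 = 4 ^ m.+1 * 4 ^ m by rewrite -expnD addSn addnn.
  rewrite leq_mul ?IHn //; first by lia.
  apply: leq_trans (bin_mid_leq m).
  by apply: dvdn_leq (prod_primes_mid_dvdn_bin m); rewrite bin_gt0; lia.
move: IHn lt_2n even_n; case: n => // n IHn lt_2n even_n.
have not_prime : ~~ prime n.+1 by apply: contra even_n => /even_prime[|//]; lia.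
rewrite primorialS (negbTE not_prime) muln1 (leq_trans (IHn n _)) ?leq_pexp2l //.
Qed.

Lemma of_digits_rcons b s d :
  of_digits b (rcons s d) = of_digits b s + b ^ size s * d.
Proof.
elim: s => [|x s IHs] /=; first by rewrite /of_digits /= muln0 addn0 mul1n.
by rewrite /of_digits /= -!/(of_digits b _) IHs expnS mulnDr addnA mulnA.
Qed.

Lemma of_digits_lt b s : all (fun d => d < b) s -> of_digits b s < b ^ size s.
Proof.
elim: s => [|d s IHs] //= /andP[lt_db /IHs lt_sb].
rewrite /of_digits /= -/(of_digits b s) expnS.
have : of_digits b s <= (b ^ size s).-1 by rewrite -ltnS prednK // (leq_ltn_trans _ lt_sb).
nia.
Qed.

Lemma digits_aux_lt fuel b n : 0 < b -> all (fun d => d < b) (digits_aux fuel b n).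
Proof.
move=> b_gt0; elim: fuel n => [|fuel IHfuel] n //=.
by case: (n == 0) => //=; rewrite ltn_pmod ?IHfuel.
Qed.

Lemma rev_digits_small b p : 0 < p < b -> rev_digits b p = p.
Proof.
case: p => [|p] // /andP[_ lt_pb].
rewrite /rev_digits /digits /= modn_small // divn_small //.
by case: p lt_pb => [|p] _; rewrite /of_digits /= muln0 addn0.
Qed.

Lemma rev_digits_lead {b p} : 0 < b -> 0 < p ->
  exists k r, r < b ^ k /\ rev_digits b p = r + b ^ k * (p %% b).
Proof.
case: p => [|p] // b_gt0 _; rewrite /rev_digits /digits /=.
set s := digits_aux _ _ _.
exists (size s), (of_digits b (rev s)); split.
  by rewrite -size_rev of_digits_lt // all_rev digits_aux_lt.
by rewrite rev_cons of_digits_rcons size_rev.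
Qed.

Lemma lead_digit_lt2 b n j k r e :
  n < b -> r < b ^ k -> e < b -> (e == 1) || (n < e) ->
  r + b ^ k * e <= n * b ^ j -> r + b ^ k * e < 2 * b ^ j.
Proof.
move=> lt_nb lt_r lt_eb /orP e_lead le_n.
have b_gt0 : 0 < b by lia.
have bj_gt0 : 0 < b ^ j by rewrite expn_gt0 b_gt0.
have [lt_kj | lt_jk | eq_kj] := ltngtP k j.
- have : b ^ k + b ^ k * e <= b ^ k.+1.
    by rewrite -mulnS expnS mulnC leq_mul2r lt_eb orbT.
  have : b ^ k.+1 <= b ^ j by rewrite leq_pexp2l.
  lia.
- have : b ^ j.+1 <= b ^ k by rewrite leq_pexp2l.
  have : b ^ k <= b ^ k * e by rewrite leq_pmulr //; case: e_lead; lia.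
  have : n * b ^ j < b ^ j.+1 by rewrite expnS ltn_pmul2r.
  lia.
- subst k; case: e_lead => [/eqP e1 | lt_ne]; first by rewrite e1; lia.
  have : n.+1 * b ^ j <= b ^ j * e by rewrite mulnC leq_mul2l lt_ne orbT.
  rewrite mulSn; lia.
Qed.

Lemma leq_sumn_mem s m : m \in s -> m <= sumn s.
Proof. by move/perm_to_rem/perm_sumn => ->; rewrite /= leq_addr. Qed.

Lemma sumn_leq_size_mul s c : {in s, forall m, m <= c} -> sumn s <= size s * c.
Proof.
move=> le_sc; rewrite sumnE -sum1_size big_distrl /= big_seq [X in _ <= X]big_seq.
by apply: leq_sum => m /le_sc; rewrite mul1n.
Qed.

Section SmoothBase.

Variables b n : nat.
Hypothesis n_gt1 : 1 < n.
Hypothesis n_lt_b : n < b.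
Hypothesis dvdn_b : forall q, prime q -> q <= n -> q %| b.

Lemma prime_modn_lead p : prime p -> b <= p -> (p %% b == 1) || (n < p %% b).
Proof.
move=> pr_p le_bp; apply: contraT => /norP[e_neq1]; rewrite -leqNgt => le_en.
have [q [pr_q dvd_qe le_qn]] : exists q, [/\ prime q, q %| p %% b & q <= n].
  have [-> | e_gt0] := posnP (p %% b); first by exists 2; rewrite dvdn0.
  exists (pdiv (p %% b)); rewrite pdiv_prime ?pdiv_dvd; last by lia.
  by split=> //; have := pdiv_leq e_gt0; lia.
have : q %| p by rewrite (divn_eq p b) dvdn_addr // dvdn_mull // dvdn_b.
by rewrite dvdn_prime2 // => /eqP; lia.
Qed.

Lemma reversed_prime_lt2 j m :
  0 < j -> reversed_prime b m -> m <= n * b ^ j -> m < 2 * b ^ j.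
Proof.
move=> j_gt0 [p [pr_p ->]].
have b_gt0 : 0 < b by lia.
have [lt_pb | le_bp] := ltnP p b.
  have : b ^ 1 <= b ^ j by rewrite leq_pexp2l.
  by rewrite rev_digits_small ?prime_gt0 //; lia.
have [k [r [lt_r ->]]] := rev_digits_lead b_gt0 (prime_gt0 pr_p).
by apply: lead_digit_lt2; rewrite ?ltn_pmod ?prime_modn_lead.
Qed.

Lemma sum_reversed_primes_bound_ge K : sum_reversed_primes_bound b K -> n <= K.*2.
Proof.
case=> N0 sum_N; set j := N0.+1.
have bj_gt0 : 0 < b ^ j by rewrite expn_gt0; lia.
have le_N0 : N0 <= n * b ^ j.
  have : j < b ^ j by apply: ltn_expl; lia.
  have : b ^ j <= n * b ^ j by apply: leq_pmull; lia.
  lia.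
have [s [size_s [rev_s sum_s]]] := sum_N _ le_N0.
have le_s : {in s, forall m, m <= 2 * b ^ j}.
  move=> m m_s; apply/ltnW/reversed_prime_lt2 => //; first exact: rev_s.
  by rewrite -sum_s leq_sumn_mem.
move/sumn_leq_size_mul: le_s; rewrite sum_s mulnA => le_nK.
by rewrite -(leq_pmul2r bj_gt0) (leq_trans le_nK) // -muln2 !leq_mul2r size_s !orbT.
Qed.

Lemma Krev_ge_half : Krev_ge b (INR n / 2).
Proof.
move=> K /sum_reversed_primes_bound_ge /leP /le_INR.
by rewrite -muln2 mulnE mult_INR /=; lra.
Qed.

End SmoothBase.

Lemma Krev_ge_le b x y : (x <= y)%R -> Krev_ge b y -> Krev_ge b x.
Proof. by move=> le_xy Krev_y K /Krev_y; lra. Qed.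

Lemma INR_expn m k : INR (m ^ k) = (INR m ^ k)%R.
Proof. by elim: k => [|k IHk] //; rewrite expnS mulnE mult_INR IHk. Qed.

Lemma ln_INR_leq_exp2 {b k} : 0 < b -> b <= 2 ^ k -> (ln (INR b) <= INR k)%R.
Proof.
move=> b_gt0 le_bk.
have ln2_lt1 : (ln (INR 2) < 1)%R.
  rewrite -[X in (_ < X)%R]ln_exp; apply: ln_increasing => /=; first lra.
  by have := exp_ineq1 1 R1_neq_R0; lra.
have : (ln (INR b) <= ln (INR (2 ^ k)))%R.
  move: le_bk; rewrite leq_eqVlt => /orP[/eqP -> | lt_bk]; first exact: Rle_refl.
  by apply/Rlt_le/ln_increasing; [apply: lt_0_INR | apply: lt_INR]; apply/ltP.
rewrite INR_expn ln_pow; last by apply: lt_0_INR; apply/ltP.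
by have := pos_INR k; nra.
Qed.

Definition primorial_base (n : nat) : nat := primorial n * 2 ^ n.

Lemma dvdn_primorial_base n q : prime q -> q <= n -> q %| primorial_base n.
Proof. by move=> pr_q le_qn; rewrite dvdn_mulr // dvdn_primorial. Qed.

Lemma ltn_primorial_base n : n < primorial_base n.
Proof. by rewrite (leq_trans (ltn_expl n (ltnSn 1))) // leq_pmull ?primorial_gt0. Qed.

Lemma primorial_base_ltS n : primorial_base n < primorial_base n.+1.
Proof.
have := primorial_leqS n; have := primorial_gt0 n.
have : 0 < 2 ^ n by rewrite expn_gt0.
rewrite /primorial_base expnS; move: (primorial _) (primorial _) (2 ^ n) => x y z.
nia.
Qed.

Lemma primorial_base_leq_exp2 n : primorial_base n <= 2 ^ (3 * n).
Proof.
by rewrite expnM -[2 ^ 3]/(4 * 2) expnMn leq_mul2r primorial_leq_exp4 orbT.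
Qed.

Lemma Krev_ge_primorial_base n :
  1 < n -> Krev_ge (primorial_base n) (/ 6 * ln (INR (primorial_base n)))%R.
Proof.
move=> n_gt1; apply: Krev_ge_le (Krev_ge_half _ _ n_gt1 (ltn_primorial_base n)
  (dvdn_primorial_base n)).
have := ln_INR_leq_exp2 (leq_ltn_trans (leq0n n) (ltn_primorial_base n))
  (primorial_base_leq_exp2 n).
rewrite mulnE mult_INR /=; lra.
Qed.

Theorem theorem6p5 :
  exists (c : R) (bs : nat -> nat),
    (0 < c)%R /\
    (forall i, 2 <= bs i) /\
    (forall i, bs i < bs i.+1) /\
    (forall i, Krev_ge (bs i) (c * ln (INR (bs i)))%R).
Proof.
exists (/ 6)%R, (fun i => primorial_base i.+2); split; first lra.
split; first by move=> i; apply: leq_trans (ltn_primorial_base i.+2).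
split; first by move=> i; apply: primorial_base_ltS.
by move=> i; apply: Krev_ge_primorial_base.
Qed.
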